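(* Let $R$ be a commutative ring with $2=0$, let $\mathcal{G}$ be the complete quadrilateral with points $a,b,c,x,y,z$ and lines $\ell_1=\{a,b,c\}$, $\ell_2=\{b,x,z\}$, $\ell_3=\{a,y,z\}$, $\ell_4=\{c,x,y\}$, and let $A=M_R(\mathcal{G},1)$. Put $\ell=\ell_1$ and $s=a+b+c+x+y+z$, and consider the $R$-basis $\mathcal{B}=(a,\ b,\ \ell,\ \ell x,\ \ell y,\ s)$ of $A$, where $\ell x=b+c+y+z$ and $\ell y=a+c+x+z$. For $\lambda\in R^\times$ and $i\in\{1,2,3,4\}$ let $\tau_{\ell_i,\lambda}=\mathrm{id}+(1+\lambda)\operatorname{ad}_{\ell_i}$. Then, with respect to $\mathcal{B}$ (the $j$-th column giving the coordinates of the image of the $j$-th basis vector), \[ \tau_{\ell_1,\lambda}=S_{0,0,\lambda},\quad \tau_{\ell_2,\lambda}=S_{1+\lambda,0,\lambda},\quad \tau_{\ell_3,\lambda}=S_{0,1+\lambda,\lambda},\quad \tau_{\ell_4,\lambda}=S_{1+\lambda,1+\lambda,\lambda}. \]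
   Context: For distinct collinear points $p,q$ (written $p\sim q$), $p\wedge q$ is the third point of their line. The nilpotent Matsuo algebra $A=M_R(\mathcal{G},1)$ is the free $R$-module with basis the points and commutative bilinear product $p\cdot q=0$ if $p=q$ or $p\not\sim q$, $p\cdot q=p+q+p\wedge q$ if $p\sim q$; a line is identified with the sum of its three points, and $\operatorname{ad}_{\ell}(v)=\ell v$. For $\alpha,\beta\in R$, $M_{\alpha,\beta}=\begin{pmatrix}\alpha&0&\beta\\0&\beta&\alpha\\0&0&0\end{pmatrix}$, and for $\lambda\in R^\times$, $S_{\alpha,\beta,\lambda}$ is the $6\times6$ block matrix $\begin{pmatrix}I_3&O_3\\ M_{\alpha,\beta}&\operatorname{diag}(\lambda,\lambda,1)\end{pmatrix}$ with $I_3$ the identity and $O_3$ the zero $3\times3$ matrix. *)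

From HB Require Import structures.
From mathcomp Require Import all_boot all_order all_algebra.
Set Implicit Arguments. Unset Strict Implicit. Unset Printing Implicit Defensive.
Import GRing.Theory.
Local Open Scope ring_scope.

Definition pt := 'I_6.
Definition pa : pt := inord 0.
Definition pb : pt := inord 1.
Definition pc : pt := inord 2.
Definition px : pt := inord 3.
Definition py : pt := inord 4.
Definition pz : pt := inord 5.

(* Lines l1 = {a,b,c}, l2 = {b,x,z}, l3 = {a,y,z}, l4 = {c,x,y}; index i : 'I_4 <-> l_(i+1). *)
Definition line (i : 'I_4) : {set pt} :=
  match val i with
  | 0 => [set pa; pb; pc]
  | 1 => [set pb; px; pz]
  | 2 => [set pa; py; pz]
  | _ => [set pc; px; py]
  end.

Definition collinear (p q : pt) : bool :=
  (p != q) && [exists i, (p \in line i) && (q \in line i)].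

Definition wedge (p q : pt) : pt :=
  odflt p [pick r | [&& r != p, r != q & [exists i, [&& p \in line i, q \in line i & r \in line i]]]].

Section Matsuo.
Variable R : comPzRingType.

(* A = M_R(G,1): the free R-module with basis the points, elements as row vectors *)
Definition A := 'rV[R]_6.
Definition ept (p : pt) : A := delta_mx 0 p.

Definition pprod (p q : pt) : A :=
  if collinear p q then ept p + ept q + ept (wedge p q) else 0.

Definition amul (v w : A) : A :=
  \sum_(p : pt) \sum_(q : pt) (v 0 p * w 0 q) *: pprod p q.

Definition lineV (i : 'I_4) : A := \sum_(p in line i) ept p.

Definition ad (u v : A) : A := amul u v.

Definition tau (i : 'I_4) (lam : R) (v : A) : A := v + (1 + lam) *: ad (lineV i) v.

Definition sV : A := \sum_(p : pt) ept p.

Definition basisB (j : 'I_6) : A :=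
  match val j with
  | 0 => ept pa
  | 1 => ept pb
  | 2 => lineV (inord 0)
  | 3 => amul (lineV (inord 0)) (ept px)
  | 4 => amul (lineV (inord 0)) (ept py)
  | _ => sV
  end.

Definition Mab (al be : R) : 'M[R]_3 :=
  \matrix_(i < 3, j < 3)
    match val i, val j with
    | 0, 0 => al | 0, 2 => be
    | 1, 1 => be | 1, 2 => al
    | _, _ => 0
    end.

Definition diag3 (lam : R) : 'M[R]_3 :=
  \matrix_(i < 3, j < 3) (if i == j then (if val i == 2%N then 1 else lam) else 0).

Definition Smx (al be lam : R) : 'M[R]_(3 + 3) :=
  block_mx 1%:M 0 (Mab al be) (diag3 lam).

Definition has_matrix (f : A -> A) (M : 'M[R]_(3 + 3)) : Prop :=
  forall j : 'I_6, f (basisB j) = \sum_(k < 6) M k j *: basisB k.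

End Matsuo.

From mathcomp Require Import all_boot all_order all_algebra.
From mathcomp Require Import ring.
Import GRing.Theory.
Local Open Scope ring_scope.

(* Since [tau l lam = id + (1 + lam) ad_l], it suffices to find the matrix of
   [ad_l] on B.  It is [N(a, b) = [[0, 0], [M_{a,b}, diag(1, 1, 0)]]] with
   [a, b] in {0, 1}, and because [2 = 0] we get
   [1 + (1 + lam) N(a, b) = S_{(1+lam)a, (1+lam)b, lam}].  All vectors involved
   have natural-number coordinates, so the products in A, and hence the 24
   column identities for the four lines, reduce to a finite computation on
   [nat] checked modulo 2. *)

Definition lines_nat : seq (seq nat) :=
  [:: [:: 0; 1; 2]; [:: 1; 3; 5]; [:: 0; 4; 5]; [:: 2; 3; 4]]%N.

Lemma mem_line (i : 'I_4) (p : pt) : (p \in line i) = (val p \in nth [::] lines_nat i).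
Proof.
by case: i => [[|[|[|[|i]]]] hi] //=; rewrite !inE -!(inj_eq val_inj) /= !inordK // -orbA.
Qed.

Lemma exists_line_has (P : seq nat -> bool) :
  [exists i : 'I_4, P (nth [::] lines_nat i)] = has P lines_nat.
Proof.
apply/existsP/(has_nthP [::]) => [[i Pi] | [i lt_i4 Pi]]; first by exists i.
by exists (Ordinal lt_i4).
Qed.

Definition collinear_nat (p q : nat) : bool :=
  (p != q) && has (fun l => (p \in l) && (q \in l)) lines_nat.

Lemma collinearE (p q : pt) : collinear p q = collinear_nat p q.
Proof.
rewrite /collinear /collinear_nat -val_eqE -exists_line_has.
by congr (_ && _); apply: eq_existsb => i; rewrite !mem_line.
Qed.

Definition third_nat (p q r : nat) : bool :=
  [&& r != p, r != q & has (fun l => [&& p \in l, q \in l & r \in l]) lines_nat].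

Definition wedge_nat (p q : nat) : nat := head 0%N [seq r <- iota 0 6 | third_nat p q r].

Lemma all_iota_pt {P : nat -> bool} : all P (iota 0 6) -> forall p : pt, P p.
Proof. by move/allP=> allP p; apply: allP; rewrite mem_iota ltn_ord. Qed.

Definition wedge_table_ok : bool :=
  all (fun p => all (fun q => collinear_nat p q ==>
    [&& wedge_nat p q < 6, third_nat p q (wedge_nat p q)
      & all (fun r => third_nat p q r ==> (r == wedge_nat p q)) (iota 0 6)])%N
    (iota 0 6)) (iota 0 6).

Lemma wedge_table_valid : wedge_table_ok.
Proof. by vm_compute. Qed.

Lemma wedge_natE (p q : pt) : collinear p q -> val (wedge p q) = wedge_nat p q.
Proof.
rewrite collinearE => pq.
have /and3P[lt_w6 third_w uniq_w] :=
  implyP (all_iota_pt (all_iota_pt wedge_table_valid p) q) pq.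
have third_natE (r : pt) :
    [&& r != p, r != q & [exists i, [&& p \in line i, q \in line i & r \in line i]]]
    = third_nat p q r.
  rewrite /third_nat -!val_eqE -exists_line_has; congr [&& _, _ & _].
  by apply: eq_existsb => i; rewrite !mem_line.
rewrite /wedge; case: pickP => [r | no_third] /=.
  by rewrite third_natE => /(implyP (all_iota_pt uniq_w r))/eqP.
by have := no_third (Ordinal lt_w6); rewrite third_natE third_w.
Qed.

Definition nsum6 (G : nat -> nat) : nat := foldr (fun p s => G p + s)%N 0%N (iota 0 6).

Definition pprod_nat (p q k : nat) : nat :=
  if collinear_nat p q then ((p == k) + (q == k) + (wedge_nat p q == k))%N else 0%N.

Definition amul_nat (f g : nat -> nat) (k : nat) : nat :=
  nsum6 (fun p => nsum6 (fun q => f p * g q * pprod_nat p q k))%N.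

Definition point_nat (p k : nat) : nat := p == k.
Definition line_nat (i k : nat) : nat := k \in nth [::] lines_nat i.

Definition basis_nat (j : nat) : nat -> nat :=
  match j with
  | 0 => point_nat 0
  | 1 => point_nat 1
  | 2 => line_nat 0
  | 3 => amul_nat (line_nat 0) (point_nat 3)
  | 4 => amul_nat (line_nat 0) (point_nat 4)
  | _ => fun _ => 1%N
  end.

Section NatCoordinates.
Variable R : comPzRingType.

Definition vec (f : nat -> nat) : A R := \row_(k < 6) (f k)%:R.

Lemma natr_sum6 (G : nat -> nat) : \sum_(p < 6) (G p)%:R = (nsum6 G)%:R :> R.
Proof. by rewrite -natr_sum -(big_mkord xpredT G) unlock. Qed.

Lemma sum_scale_vec (c : nat -> nat) (g : nat -> nat -> nat) :
  \sum_(k < 6) (c k)%:R *: vec (g k) = vec (fun m => nsum6 (fun k => c k * g k m))%N.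
Proof.
apply/rowP => m; rewrite summxE mxE -natr_sum6.
by apply: eq_bigr => k _; rewrite !mxE natrM.
Qed.

Lemma ept_vec (p : pt) : ept R p = vec (point_nat p).
Proof. by apply/rowP => k; rewrite !mxE eqxx eq_sym. Qed.

Lemma lineV_vec (i : 'I_4) : lineV R i = vec (line_nat i).
Proof.
apply/rowP => k; rewrite summxE mxE /line_nat -mem_line big_mkcond (bigD1 k) //=.
rewrite big1 => [|p /negbTE ne_pk]; first by rewrite mxE !eqxx addr0; case: (k \in _).
by case: ifP => // _; rewrite !mxE eqxx eq_sym ne_pk.
Qed.

Lemma sV_vec : sV R = vec (fun _ => 1%N).
Proof.
apply/rowP => k; rewrite summxE (bigD1 k) //= big1 => [|p /negbTE ne_pk].
  by rewrite !mxE !eqxx addr0.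
by rewrite !mxE eqxx eq_sym ne_pk.
Qed.

Lemma pprod_vec (p q : pt) : pprod R p q = vec (pprod_nat p q).
Proof.
rewrite /pprod /pprod_nat collinearE; case: ifP => pq; last by apply/rowP => k; rewrite !mxE.
rewrite !ept_vec; apply/rowP => k; rewrite !mxE !natrD.
by rewrite /point_nat wedge_natE ?collinearE.
Qed.

Lemma amul_vec (f g : nat -> nat) : amul (vec f) (vec g) = vec (amul_nat f g).
Proof.
apply/rowP => k; rewrite /amul summxE mxE -natr_sum6; apply: eq_bigr => p _.
rewrite summxE -natr_sum6; apply: eq_bigr => q _.
by rewrite pprod_vec !mxE !natrM.
Qed.

Lemma basisB_vec (j : 'I_6) : basisB R j = vec (basis_nat j).
Proof.
case: j => [[|[|[|[|[|[|j]]]]]] hj] //=;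
  by rewrite /basisB /= ?ept_vec ?lineV_vec ?sV_vec ?amul_vec ?inordK.
Qed.
End NatCoordinates.

Definition ad_coef (a b : bool) (k j : nat) : nat :=
  match k, j with
  | 3, 0 | 4, 2 => a
  | 3, 2 | 4, 1 => b
  | 3, 3 | 4, 4 => 1
  | _, _ => 0
  end%N.

Definition ad_table_ok (i : nat) (a b : bool) : bool :=
  all (fun j => all (fun m =>
    amul_nat (line_nat i) (basis_nat j) m == nsum6 (fun k => ad_coef a b k j * basis_nat k m)
    %[mod 2]) (iota 0 6)) (iota 0 6).

Section Matrices.
Variable R : comPzRingType.

Definition ad_mx (a b : bool) : 'M[R]_(3 + 3) := \matrix_(k, j) (ad_coef a b k j)%:R.

Lemma tau_has_matrix (i : 'I_4) (lam : R) (N : 'M[R]_(3 + 3)) :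
  has_matrix (ad (lineV R i)) N -> has_matrix (tau i lam) (1%:M + (1 + lam) *: N).
Proof.
move=> adN j; rewrite /tau adN scaler_sumr.
have -> : basisB R j = \sum_k (1%:M : 'M[R]_(3 + 3)) k j *: basisB R k.
  rewrite (bigD1 j) //= big1 => [|k /negbTE ne_kj]; first by rewrite mxE eqxx scale1r addr0.
  by rewrite mxE ne_kj scale0r.
by rewrite -big_split; apply: eq_bigr => k _ /=; rewrite !mxE scalerA -scalerDl.
Qed.

Hypothesis two0 : 2%:R = 0 :> R.

Lemma natr_mod2 (n : nat) : n%:R = (n %% 2)%:R :> R.
Proof. by rewrite {1}(divn_eq n 2) natrD natrM two0 mulr0 add0r. Qed.

Lemma vec_mod2 (f g : nat -> nat) : (forall k : pt, f k = g k %[mod 2]) -> vec R f = vec R g.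
Proof. by move=> fg; apply/rowP => k; rewrite !mxE natr_mod2 fg -natr_mod2. Qed.

Lemma ad_line_has_matrix (i : 'I_4) (a b : bool) :
  ad_table_ok i a b -> has_matrix (ad (lineV R i)) (ad_mx a b).
Proof.
move=> ok j; rewrite /ad lineV_vec basisB_vec amul_vec.
under eq_bigr => k _ do rewrite basisB_vec mxE.
rewrite (sum_scale_vec R (fun k => ad_coef a b k j)); apply: vec_mod2 => m.
exact/eqP/(all_iota_pt (all_iota_pt ok j) m).
Qed.

Lemma Smx_ad_mx (lam : R) (a b : bool) :
  Smx ((1 + lam) *+ a) ((1 + lam) *+ b) lam = 1%:M + (1 + lam) *: ad_mx a b.
Proof.
apply/matrixP => k j; rewrite /Smx /block_mx !mxE.
case: splitP => k' hk; rewrite mxE; case: splitP => j' hj;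
  rewrite !mxE -[k == j]/(k == j :> nat) hk hj;
  case: k' {hk} j' {hj} => [[|[|[|?]]] ?] // [[|[|[|?]]] ?] //;
  by case: a; case: b; rewrite /= ?mulr0n ?mulr1n; ring: two0.
Qed.
End Matrices.

Theorem lemma6p9 (R : comUnitRingType) (h2 : (2%:R : R) = 0) (lam : R)
    (hlam : lam \is a GRing.unit) :
  [/\ has_matrix (tau (inord 0) lam) (Smx 0 0 lam),
      has_matrix (tau (inord 1) lam) (Smx (1 + lam) 0 lam),
      has_matrix (tau (inord 2) lam) (Smx 0 (1 + lam) lam)
    & has_matrix (tau (inord 3) lam) (Smx (1 + lam) (1 + lam) lam)].
Proof.
have tau_Smx (i : 'I_4) (a b : bool) : ad_table_ok i a b ->
    has_matrix (tau i lam) (Smx ((1 + lam) *+ a) ((1 + lam) *+ b) lam).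
  by move=> ok; rewrite Smx_ad_mx //; apply/tau_has_matrix/ad_line_has_matrix.
split; [apply: (tau_Smx _ false false) | apply: (tau_Smx _ true false)
       | apply: (tau_Smx _ false true) | apply: (tau_Smx _ true true)];
  by rewrite inordK //; vm_compute.
Qed.
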